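(* There does not exist a real linear map $\phi \colon M_2 \to \mathcal H_2$ such that $\phi(\mathcal U_2) \subset \mathcal H_2 \cap \mathcal U_2$.
   Context: $M_2$ is the set of $2\times 2$ complex matrices, $\mathcal U_2$ the unitary ones, and $\mathcal H_2$ the real vector space of $2\times2$ complex hermitian matrices. *)

From HB Require Import structures.
From mathcomp Require Import all_boot all_order all_algebra.
From mathcomp Require Import complex reals.
Set Implicit Arguments. Unset Strict Implicit. Unset Printing Implicit Defensive.
Import Order.TTheory GRing.Theory Num.Theory.
Local Open Scope ring_scope.
Local Open Scope complex_scope.

Definition M2 (R : realType) := 'M[R[i]]_2.

Definition adjM (R : realType) (A : M2 R) : M2 R := map_mx Num.conj A^T.

Definition hermM2 (R : realType) (A : M2 R) : Prop := adjM A = A.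

Definition unitaryM2 (R : realType) (A : M2 R) : Prop := A *m adjM A = 1%:M.

Definition real_linear (R : realType) (phi : M2 R -> M2 R) : Prop :=
  (forall A B, phi (A + B) = phi A + phi B) /\
  (forall (r : R) A, phi (r%:C *: A) = r%:C *: phi A).

From HB Require Import structures.
From mathcomp Require Import all_boot all_order all_algebra.
From mathcomp Require Import complex reals ring lra.
Import Order.TTheory GRing.Theory Num.Theory.
Local Open Scope ring_scope.
Local Open Scope complex_scope.
Set Implicit Arguments.
Unset Strict Implicit.

(* The unit quaternions x0 + x1 i + x2 j + x3 k form a real-linear copy of the
   unit sphere of R^4 inside U_2.  If phi existed, the images H_0, ..., H_3 of
   the basis quaternions would be hermitian unitaries, i.e. hermitian
   involutions, and so would (3/5) H_i + (4/5) H_j; expanding its square shows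
   that the H_i pairwise anticommute.  For hermitian H, K the (0,0) entry of
   HK + KH is twice the euclidean inner product of the real vectors
   (Re H00, Re H01, Im H01) and (Re K00, Re K01, Im K01), so the H_i would give
   four orthonormal vectors in R^3. *)

Lemma big_ord2 (V : nmodType) (f : 'I_2 -> V) : \sum_(k < 2) f k = f 0 + f 1.
Proof.
rewrite !big_ord_recr big_ord0 /= add0r.
by congr (f _ + f _); apply: val_inj.
Qed.

Lemma big_ord4 (V : nmodType) (f : 'I_4 -> V) :
  \sum_(k < 4) f k = f 0 + f 1 + f 2 + f 3.
Proof.
rewrite !big_ord_recr big_ord0 /= add0r.
by congr (f _ + f _ + f _ + f _); apply: val_inj.
Qed.

Lemma orthonormal_rows_leq (F : fieldType) m n (A : 'M[F]_(m, n)) :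
  A *m A^T = 1%:M -> (m <= n)%N.
Proof.
move=> AAt; rewrite -[m](mxrank1 F) -AAt.
exact: leq_trans (mxrankM_maxl _ _) (rank_leq_col A).
Qed.

Lemma mul_delta_row_trmx (R : pzSemiRingType) n (i j : 'I_n) :
  delta_mx 0 i *m (delta_mx 0 j)^T = (i == j)%:R%:M :> 'M[R]_1.
Proof.
rewrite trmx_delta mul_delta_mx_cond [delta_mx 0 0]mx11_scalar mxE !eqxx.
by case: (i == j); rewrite ?mulr1n ?mulr0n ?raddf0.
Qed.

Lemma orthonormal_comb_unit (R : comNzRingType) n (u v : 'rV[R]_n) (a b : R) :
  u *m u^T = 1%:M -> v *m v^T = 1%:M -> u *m v^T = 0 -> a ^+ 2 + b ^+ 2 = 1 ->
  (a *: u + b *: v) *m (a *: u + b *: v)^T = 1%:M.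
Proof.
move=> uu vv uv ab1; have vu : v *m u^T = 0 by rewrite -[v]trmxK -trmx_mul uv trmx0.
rewrite linearD !linearZ /= mulmxDl !mulmxDr -!scalemxAl -!scalemxAr.
by rewrite uu vv uv vu !scaler0 addr0 add0r !scalerA -!expr2 -scalerDl ab1 scale1r.
Qed.

Lemma anticomm_of_involutions (F : fieldType) (A : algType F) (a b : F) (H K : A) :
  a ^+ 2 + b ^+ 2 = 1 -> a * b != 0 -> H * H = 1 -> K * K = 1 ->
  (a *: H + b *: K) * (a *: H + b *: K) = 1 -> H * K + K * H = 0.
Proof.
move=> ab1 ab_neq0 HH KK.
rewrite mulrDl !mulrDr -!scalerAl -!scalerAr !scalerA HH KK [b * a]mulrC.
rewrite [_ *: (K * H) + _]addrC addrACA -scalerDl -!expr2 ab1 scale1r -scalerDr.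
move/(canRL (addKr 1)); rewrite addNr => /eqP.
by rewrite scaler_eq0 (negbTE ab_neq0) => /eqP.
Qed.

Section UnitQuaternions.
Variable R : realType.

Definition quat (x : 'rV[R]_4) : M2 R :=
  \matrix_(i, j)
    if i == 0 then (if j == 0 then x 0 0 +i* x 0 3 else x 0 2 +i* x 0 1)
    else (if j == 0 then (- x 0 2) +i* x 0 1 else x 0 0 -i* x 0 3).

Lemma quatD (x y : 'rV[R]_4) : quat (x + y) = quat x + quat y.
Proof. by apply/matrixP => i j; rewrite !mxE; case: ifP => _; case: ifP => _; simpc. Qed.

Lemma quatZ (a : R) (x : 'rV[R]_4) : quat (a *: x) = a%:C *: quat x.
Proof. by apply/matrixP => i j; rewrite !mxE; case: ifP => _; case: ifP => _; simpc. Qed.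

Lemma quat_unitary (x : 'rV[R]_4) : x *m x^T = 1%:M -> unitaryM2 (quat x).
Proof.
move=> /matrixP/(_ 0 0); rewrite !mxE big_ord4 !mxE /= => x1.
rewrite /unitaryM2 /adjM; apply/matrixP => i j.
rewrite !mxE !big_ord2 !mxE.
case: i => [[|[|i]] Hi] //; case: j => [[|[|j]] Hj] //=; simpc.
all: apply/eqP; rewrite eq_complex /=; apply/andP; split; apply/eqP;
  rewrite -?[RHS]x1; ring.
Qed.

End UnitQuaternions.

Section HermitianCoordinates.
Variable R : realType.

Definition herm_coords (H : M2 R) : 'rV[R]_3 :=
  \row_k [:: complex.Re (H 0 0); complex.Re (H 0 1); complex.Im (H 0 1)]`_k.

Lemma herm_coords_dot (H K : M2 R) : hermM2 H -> hermM2 K ->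
  (herm_coords H *m (herm_coords K)^T) 0 0 = complex.Re ((H *m K + K *m H) 0 0) / 2.
Proof.
move=> /matrixP hH /matrixP hK.
have := hH 0 0; have := hH 1 0; have := hK 0 0; have := hK 1 0; rewrite /adjM !mxE.
rewrite !big_ord2 !big_ord_recr big_ord0 /= !mxE /= add0r => <- K00 <- H00.
move: K00 H00; case: (H 0 0) => a b; case: (K 0 0) => c d.
case: (H 0 1) => e f; case: (K 0 1) => g l /= [d0] [b0].
have [-> ->] : b = 0 /\ d = 0 by split; lra.
by field.
Qed.

Lemma herm_unitary_sqr (H : M2 R) : hermM2 H -> unitaryM2 H -> H *m H = 1%:M.
Proof. by rewrite /unitaryM2 => ->. Qed.

Lemma herm_anticomm_involutions_leq n (H : 'I_n -> M2 R) :
  (forall i, hermM2 (H i)) -> (forall i, H i *m H i = 1%:M) ->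
  (forall i j, i != j -> H i *m H j + H j *m H i = 0) -> (n <= 3)%N.
Proof.
move=> hermH sqrH anticommH.
apply: (orthonormal_rows_leq (A := \matrix_(i < n) herm_coords (H i))).
apply/matrixP => i j; rewrite !mxE.
transitivity ((herm_coords (H i) *m (herm_coords (H j))^T) 0 0).
  by rewrite mxE; apply: eq_bigr => k _; rewrite !mxE.
rewrite (herm_coords_dot (hermH i) (hermH j)).
case: eqVneq => [<-|ij]; last by rewrite anticommH // mxE mul0r.
by rewrite sqrH !mxE eqxx /=; field.
Qed.

End HermitianCoordinates.

Theorem corollary3p6 (R : realType) :
  ~ exists phi : M2 R -> M2 R,
      [/\ real_linear phi,
          (forall A, hermM2 (phi A)) &
          (forall U, unitaryM2 U -> hermM2 (phi U) /\ unitaryM2 (phi U))].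
Proof.
case=> phi [[phiD phiZ] _ phiU].
pose e (i : 'I_4) : 'rV[R]_4 := delta_mx 0 i.
pose H i := phi (quat (e i)).
have e_unit i : e i *m (e i)^T = 1%:M by rewrite mul_delta_row_trmx eqxx.
have phi_quat_sqr x : x *m x^T = 1%:M -> phi (quat x) *m phi (quat x) = 1%:M.
  by move=> /quat_unitary /phiU [Hherm Hunit]; apply: herm_unitary_sqr.
have hermH i : hermM2 (H i) by have [] := phiU _ (quat_unitary (e_unit i)).
have H_anticomm i j : i != j -> H i *m H j + H j *m H i = 0.
  move=> ij; pose a : R := 3 / 5; pose b : R := 4 / 5.
  have ab1 : a ^+ 2 + b ^+ 2 = 1 by rewrite /a /b; field.
  have eij : e i *m (e j)^T = 0 by rewrite mul_delta_row_trmx (negbTE ij) raddf0.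
  have := phi_quat_sqr _ (orthonormal_comb_unit (e_unit i) (e_unit j) eij ab1).
  rewrite quatD !quatZ phiD !phiZ !mulmxE.
  apply: anticomm_of_involutions; rewrite -?mulmxE ?phi_quat_sqr ?e_unit //.
    by rewrite -!rmorphXn -rmorphD ab1.
  by rewrite mulf_neq0 // fmorph_eq0 mulf_neq0 ?invr_eq0 ?pnatr_eq0.
have sqrH i : H i *m H i = 1%:M by apply/phi_quat_sqr/e_unit.
by have := herm_anticomm_involutions_leq hermH sqrH H_anticomm.
Qed.
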